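(* Let $K=\mathbb{F}_q$, $S=K[t_1,\ldots,t_s]$, and let $\mathcal{X}=[A_1\times\cdots\times A_s]\subset\mathbb{P}^{s-1}$ be a projective nested cartesian set with $d_i=|A_i|$. Let $\mathcal{L}_d$ be the $K$-vector space spanned by all monomials $t^a\in S_d$ divisible by $t_1$. If $1\leq d\leq\sum_{i=2}^s(d_i-1)$, then $$\max\{|V_{\mathcal{X}}(f)|: f\in\mathcal{L}_d,\ f\notin I(\mathcal{X})\}=\deg(S/I(\mathcal{X}))-(d_{k+2}-\ell+1)d_{k+3}\cdots d_s,$$ where $0\leq k\leq s-2$ and $\ell$ are the integers with $d=\sum_{i=2}^{k+1}(d_i-1)+\ell$ and $1\leq\ell\leq d_{k+2}-1$.
   Context: Projective nested cartesian set: for subsets $A_1,\ldots,A_s$ of $K$, $\mathcal{X}=[A_1\times\cdots\times A_s]$ is the image of $(A_1\times\cdots\times A_s)\setminus\{0\}$ under $K^s\setminus\{0\}\to\mathbb{P}^{s-1}$, $x\mapsto[x]$, and it is required that (i) $\{0,1\}\subset A_i$ for all $i$; (ii) $a/b\in A_j$ whenever $1\leq i<j\leq s$, $a\in A_j$, $0\neq b\in A_i$; (iii) $d_1\leq\cdots\leq d_s$ where $d_i=|A_i|$. $I(\mathcal{X})$ is the ideal generated by the homogeneous polynomials vanishing on $\mathcal{X}$; $V_{\mathcal{X}}(f)$ is the zero set of $f$ in $\mathcal{X}$. For a graded ideal $J$ with Hilbert function $H_J(d)=\dim_K(S_d/J_d)$ and $k=\dim(S/J)$, $\deg(S/J)=(k-1)!\lim_{d\to\infty}H_J(d)/d^{k-1}$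 if $k\geq1$ and $\dim_K(S/J)$ if $k=0$. *)

From HB Require Import structures.
From mathcomp Require Import all_boot all_order all_algebra all_field.
From mathcomp Require Import mpoly.
Set Implicit Arguments. Unset Strict Implicit. Unset Printing Implicit Defensive.
Import Order.TTheory GRing.Theory Num.Theory.
Local Open Scope ring_scope.

(* Variables t_1..t_s are indexed 0..s-1 by 'I_s ; paper's index i is our i-1. *)
Section ProjNested.
Variables (K : finFieldType) (s : nat).

Definition pt := {ffun 'I_s -> K}.

Definition nested_cartesian (A : 'I_s -> {set K}) : Prop :=
  [/\ (forall i, (0 : K) \in A i /\ (1 : K) \in A i),
      (forall (i j : 'I_s) (a b : K), (i < j)%N -> a \in A j -> b \in A i ->
          b != 0 -> a / b \in A j)
    & (forall i j : 'I_s, (i <= j)%N -> #|A i| <= #|A j|)%N].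

(* canonical representative of the projective point [x] (x <> 0):
   x scaled so that its first nonzero coordinate equals 1 *)
Definition normalize (x : pt) : pt :=
  match [pick i : 'I_s | x i != 0] with
  | Some i => [ffun j => (x i)^-1 * x j]
  | None => x
  end.

(* X = [A_1 x ... x A_s] in P^{s-1}, each projective point represented by its
   normalized representative (bijection with the projective points) *)
Definition projX (A : 'I_s -> {set K}) : {set pt} :=
  [set normalize x | x in [set x : pt | (x != 0) && [forall i, x i \in A i]]].

Definition VX (A : 'I_s -> {set K}) (f : {mpoly K[s]}) : {set pt} :=
  [set x in projX A | f.@[x] == 0].

Definition homog_vanishing (A : 'I_s -> {set K}) (h : {mpoly K[s]}) : Prop :=
  (exists e : nat, h \is e.-homog) /\ (forall x, x \in projX A -> h.@[x] = 0).

Definition in_IX (A : 'I_s -> {set K}) (f : {mpoly K[s]}) : Prop :=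
  exists (r : seq ({mpoly K[s]} * {mpoly K[s]})),
    (forall gh, gh \in r -> homog_vanishing A gh.2) /\
    f = \sum_(gh <- r) gh.1 * gh.2.

(* Hilbert function of S/I(X): H(d) = dim_K S_d / I(X)_d.  Since I(X)_d is the
   kernel of the evaluation map S_d -> K^X, this is the rank of the matrix of
   values of the degree-d monomials at the points of X. *)
Definition bmnm (d : nat) : finType := 'X_{1..s < d.+1}.

Definition hilbX (A : 'I_s -> {set K}) (d : nat) : nat :=
  \rank (\matrix_(i < #|bmnm d|, j < #|projX A|)
           (let m : bmnm d := enum_val i in
            if mdeg m == d then ('X_[val m] : {mpoly K[s]}).@[enum_val j]
            else 0)).

End ProjNested.

(* deg(S/J) from its Hilbert function H, with k = dim(S/J):
   k >= 1 : deg = (k-1)! lim H(d)/d^(k-1) (the limit being finite and positive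
            exactly for k = dim S/J);
   k = 0  : H eventually 0 and deg = dim_K(S/J) = sum_d H(d). *)
Definition is_hdeg (H : nat -> nat) (e : nat) : Prop :=
  (exists k : nat, (1 <= k)%N /\ (0 < e)%N /\
     forall eps : rat, 0 < eps -> exists N : nat, forall d : nat, (N <= d)%N ->
       `| (H d)%:R / (d%:R ^+ k.-1) - e%:R / (k.-1)`!%:R | < eps)
  \/ (exists N : nat, (forall d, (N <= d)%N -> H d = 0%N) /\
        e = (\sum_(d < N) H d)%N).

(* d_i = |A_i| with the paper's 1-based index i (1 <= i <= s) *)
Definition dsz (K : finFieldType) (s : nat) (A : 'I_s -> {set K}) (i : nat) : nat :=
  if (insub i.-1 : option 'I_s) is Some j then #|A j| else 0%N.

From Pilot Require Import Defs.
From HB Require Import structures.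
From mathcomp Require Import all_boot all_order all_algebra all_field.
From mathcomp Require Import mpoly.
From mathcomp Require Import zify ring.
Set Implicit Arguments. Unset Strict Implicit. Unset Printing Implicit Defensive.
Import Order.TTheory GRing.Theory Num.Theory.
Local Open Scope ring_scope.

(* Every f in L_d vanishes at the points of X with t_1 = 0, and by the nesting
   condition (ii) the points of X with t_1 <> 0 are exactly the [1 : y] with y
   in the grid A_2 x ... x A_s.  Hence |V_X(f)| = |X| - N(f), where N(f) counts
   the grid points at which f(1, y), a polynomial of degree <= d - 1, does not
   vanish.  A footprint bound of Alon-Furedi type, proved by induction on the
   number of sides after reducing each variable modulo the vanishing polynomial
   of its side, gives N(f) >= (d_{k+2} - l + 1) d_{k+3} ... d_s whenever
   N(f) > 0, with equality for products of linear forms vanishing on initial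
   segments of the A_i.  Finally, in degree > (q - 1) s homogeneous polynomials
   separate the points of the finite set X, so the Hilbert function of S/I(X)
   is eventually |X| and deg S/I(X) = |X|. *)

(* For sorted [B = b_1 <= ... <= b_n] this is the least number of non-zeros on
   a grid with sides of sizes [b_i] of a polynomial of degree [<= E] that does
   not vanish on the whole grid. *)
Fixpoint min_nonzeros (B : seq nat) (E : nat) : nat :=
  if B is b :: B' then
    if (E < b.-1)%N then ((b - E) * \prod_(c <- B') c)%N
    else min_nonzeros B' (E - b.-1)
  else 1%N.

Lemma min_nonzeros_sub (B : seq nat) (u E : nat) :
  sorted leq B -> all (fun b => u < b)%N B -> (u <= E)%N ->
  (min_nonzeros B (E - u) <= u.+1 * min_nonzeros B E)%N.
Proof.
elim: B E => [|b B IH] E; first by rewrite /= muln1.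
move=> /= sBb /andP[ub uB] uE.
have sB : sorted leq B := path_sorted sBb.
case: (ltnP E b.-1) => hE.
  rewrite (_ : (E - u < b.-1)%N = true); last by lia.
  rewrite mulnA leq_mul2r; apply/orP; right; nia.
case: (ltnP (E - u) b.-1) => hEu; last first.
  by rewrite (_ : (E - u - b.-1 = E - b.-1 - u)%N); [apply: IH => //; lia | lia].
case: B sBb sB uB IH => [|c C] sBb sB uB IH /=; first by rewrite big_nil !muln1; lia.
move: sBb uB => /= /andP[bc _] /andP[uc _].
rewrite (_ : (E - b.-1 < c.-1)%N = true); last by lia.
rewrite big_cons !mulnA leq_mul2r; apply/orP; right; nia.
Qed.

Lemma min_nonzeros_cons_le (b : nat) (B : seq nat) (E t : nat) :
  sorted leq (b :: B) -> (t <= E)%N -> (t < b)%N ->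
  (min_nonzeros (b :: B) E <= (b - t) * min_nonzeros B (E - t))%N.
Proof.
move=> sbB tE tb /=.
have bB : all (fun c => b <= c)%N B := order_path_min leq_trans sbB.
case: ifP => hE.
  case: B sbB bB => [|c C] sbB /=; first by rewrite big_nil !muln1; lia.
  case/andP=> bc _.
  rewrite (_ : (E - t < c.-1)%N = true); last by lia.
  rewrite big_cons !mulnA leq_mul2r; apply/orP; right; nia.
rewrite (_ : (E - b.-1 = (E - t) - (b.-1 - t))%N); last by lia.
rewrite (_ : (b - t = (b.-1 - t).+1)%N); last by lia.
apply: min_nonzeros_sub; [exact: path_sorted sbB | | lia].
by apply/allP => c /(allP bB); lia.
Qed.

Lemma min_nonzeros_take (B : seq nat) k l :
  (k < size B)%N -> (l < (nth 0%N B k).-1)%N ->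
  min_nonzeros B (sumn [seq b.-1 | b <- take k B] + l) =
    ((nth 0%N B k - l) * \prod_(c <- drop k.+1 B) c)%N.
Proof.
elim: B k => [|b B IH] [|k] //= hk hl; first by rewrite add0n hl drop0.
rewrite ifF; last by apply/negbTE; rewrite -leqNgt -addnA leq_addr.
by rewrite -addnA addKn; apply: IH.
Qed.

Lemma min_nonzeros_gt0 (B : seq nat) E : all (fun b => 0 < b)%N B -> (0 < min_nonzeros B E)%N.
Proof.
elim: B E => [|b B IH] E //= /andP[b0 B0]; case: ifP => [hE|_]; last exact: IH.
rewrite muln_gt0 subn_gt0 (leq_trans hE (leq_pred _)) big_seq.
by apply: prodn_cond_gt0 => c /(allP B0).
Qed.

Section GridPolynomials.
Variable K : finFieldType.

Fixpoint mnm_eval (m : seq nat) (x : seq K) : K :=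
  if m is e :: m' then head 0 x ^+ e * mnm_eval m' (behead x) else 1.

(* [F] agrees with a polynomial of degree [<= E] in [N] variables, a monomial
   being encoded by its exponent list. *)
Definition polyfun (N E : nat) (F : seq K -> K) : Prop :=
  exists r : seq (K * seq nat),
    (forall p, p \in r -> (sumn p.2 <= E)%N /\ (size p.2 <= N)%N) /\
    forall x, F x = \sum_(p <- r) p.1 * mnm_eval p.2 x.

Fixpoint grid (As : seq {set K}) : seq (seq K) :=
  if As is A :: As' then [seq a :: y | a <- enum A, y <- grid As'] else [:: [::]].

Definition nonzeros (As : seq {set K}) (F : seq K -> K) : nat :=
  (\sum_(x <- grid As) (F x != 0%R : nat))%N.

Lemma sum_nat_bool_count (T : Type) (r : seq T) (P : pred T) :
  (\sum_(x <- r) (P x : nat))%N = count P r.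
Proof. by rewrite -sum1_count [RHS]big_mkcond; apply: eq_bigr => x _; case: (P x). Qed.

Lemma sum_nat_bool_card (T : finType) (X : {set T}) (b : pred T) :
  (\sum_(x in X) (b x : nat))%N = #|[set x in X | b x]|.
Proof.
rewrite -sum1_card big_mkcond [RHS]big_mkcond /=; apply: eq_bigr => x _.
by rewrite inE; case: (x \in X); case: (b x).
Qed.

Lemma mem_grid_cons A As x :
  (x \in grid (A :: As)) = if x is a :: y then (a \in A) && (y \in grid As) else false.
Proof.
apply/allpairsP/idP => [[[a y] /= [ha hy ->]]|]; first by rewrite -mem_enum ha.
by case: x => // a y /andP[ha hy]; exists (a, y); rewrite /= mem_enum.
Qed.

Lemma gridP As y :
  reflect (size y = size As /\ forall j, (j < size As)%N -> nth 0 y j \in nth set0 As j)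
          (y \in grid As).
Proof.
elim: As y => [|A As IH] y.
  by rewrite /= inE; apply: (iffP eqP) => [->|[]] //; case: y.
rewrite mem_grid_cons; case: y => [|a y] /=; first by constructor => -[].
apply: (iffP andP) => [[ha /IH[h1 h2]]|[[h1] h2]].
  by split; [rewrite h1 | case => //= j /h2].
by split; [exact: (h2 0%N) | apply/IH; split => // j /(h2 j.+1)].
Qed.

Lemma grid_uniq As : uniq (grid As).
Proof.
elim: As => [|A As IH] //=; apply: allpairs_uniq => //; first exact: enum_uniq.
by move=> [a y] [b z] _ _ /= [-> ->].
Qed.

Lemma nonzeros_cons A As F :
  nonzeros (A :: As) F = (\sum_(a in A) nonzeros As (fun y => F (a :: y)))%N.
Proof.
rewrite /nonzeros /= big_flatten big_map big_enum /=.
by apply: eq_bigr => a _; rewrite big_map.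
Qed.

Lemma nonzeros_gt0 As F : (0 < nonzeros As F)%N = has (fun x => F x != 0) (grid As).
Proof. by rewrite /nonzeros sum_nat_bool_count has_count. Qed.

Lemma nonzeros_eq0 As F : nonzeros As F = 0%N <-> {in grid As, forall x, F x = 0}.
Proof.
split => [/eqP h x hx | h]; last first.
  by apply/eqP; rewrite -leqn0 leqNgt nonzeros_gt0; apply/hasPn => x /h ->; rewrite eqxx.
by apply/eqP; apply: contraTT h => Fx; rewrite -lt0n nonzeros_gt0; apply/hasP; exists x.
Qed.

Lemma nonzeros_scale As c G :
  nonzeros As (fun y => c * G y) = ((c != 0%R) * nonzeros As G)%N.
Proof.
rewrite /nonzeros big_distrr /=; apply: eq_bigr => y _.
by rewrite mulf_eq0 negb_or; case: (c == 0); case: (G y == 0).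
Qed.

Lemma nonzeros1 As : nonzeros As (fun _ => 1) = (\prod_(A <- As) #|A|)%N.
Proof.
elim: As => [|A As IH]; first by rewrite /nonzeros big_seq1 big_nil oner_neq0.
by rewrite nonzeros_cons big_cons sum_nat_const IH.
Qed.

Lemma mnm_eval_cons m a y :
  mnm_eval m (a :: y) = a ^+ head 0%N m * mnm_eval (behead m) y.
Proof. by case: m => [|e m] /=; rewrite ?expr0 ?mulr1. Qed.

Lemma Xn_modp_prod_XsubC (A : {set K}) e :
  let r := 'X^e %% \prod_(a <- enum A) ('X - a%:P) in
  [/\ (size r <= #|A|)%N, (size r <= e.+1)%N & {in A, forall a, r.[a] = a ^+ e}].
Proof.
set Z := \prod_(a <- enum A) _ => r.
have sZ : size Z = #|A|.+1 by rewrite size_prod_XsubC cardE.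
split; first by rewrite -ltnS -sZ ltn_modp monic_neq0 // monic_prod_XsubC.
  by rewrite (leq_trans (leq_modp _ _)) // size_polyXn.
move=> a aA; have /(congr1 (horner^~ a)) := divp_eq 'X^e Z.
rewrite hornerD hornerM hornerXn => ->.
suff -> : Z.[a] = 0 by rewrite mulr0 add0r.
by apply/rootP; rewrite root_prod_XsubC mem_enum.
Qed.

(* Coefficient [j] of [F] in its first variable, after reduction modulo the
   vanishing polynomial of [A]: it has degree [<= E - j]. *)
Lemma polyfun_head_expansion N E F (A : {set K}) : polyfun N.+1 E F ->
  exists Fs : nat -> seq K -> K,
  [/\ forall j, polyfun N (E - j) (Fs j), forall j y, (E < j)%N -> Fs j y = 0 &
      forall a y, a \in A -> F (a :: y) = \sum_(j < #|A|) a ^+ j * Fs j y].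
Proof.
case=> r [hr hF].
pose rr e := 'X^e %% \prod_(a <- enum A) ('X - a%:P).
pose rj j := [seq (p.1 * (rr (head 0%N p.2))`_j, behead p.2)
             | p <- r & (j <= head 0%N p.2)%N].
have hrj j q : q \in rj j -> (sumn q.2 + j <= E)%N /\ (size q.2 <= N)%N.
  case/mapP => -[c m]; rewrite mem_filter => /andP[hj /hr] /= + ->.
  by case: m hj => [|e m] /=; lia.
exists (fun j y => \sum_(q <- rj j) q.1 * mnm_eval q.2 y); split.
- by move=> j; exists (rj j); split => // q /hrj [] /=; lia.
- by move=> j y hj; rewrite big_seq big1 // => q /hrj; lia.
move=> a y aA; rewrite hF /=; apply/esym.
under eq_bigr => j _ do rewrite mulr_sumr big_map big_filter big_mkcond /=.
rewrite exchange_big /=; apply: eq_bigr => -[c m] _ /=.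
have [srA sre rrA] := Xn_modp_prod_XsubC A (head 0%N m).
rewrite mnm_eval_cons -(rrA a aA) (horner_coef_wide _ srA) mulr_suml mulr_sumr.
apply: eq_bigr => j _; case: ifP => hj; first by rewrite /rr; ring.
by rewrite /rr nth_default ?mul0r ?mulr0 // (leq_trans sre) // ltnNge hj.
Qed.

Lemma poly_nonzeros_ge (q : {poly K}) (A : {set K}) t :
  q != 0 -> (size q <= t.+1)%N -> (#|A| - t <= \sum_(a in A) (q.[a] != 0%R : nat))%N.
Proof.
move=> q0 sq; rewrite -big_enum sum_nat_bool_count cardE.
rewrite -(count_predC (fun a => q.[a] != 0%R) (enum A)).
suff /leq_trans/(_ sq) : (count (predC (fun a => q.[a] != 0%R)) (enum A) < size q)%N.
  by rewrite ltnS leq_subLR addnC leq_add2r.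
rewrite -size_filter; apply: max_poly_roots q0 _ _; last by rewrite filter_uniq ?enum_uniq.
by apply/allP => a; rewrite mem_filter /= negbK => /andP[/rootP/eqP].
Qed.

Lemma fibre_nonzeros_ge (A : {set K}) As (Fs : nat -> seq K -> K) F t y :
  (forall a y, a \in A -> F (a :: y) = \sum_(j < #|A|) a ^+ j * Fs j y) ->
  (forall j, (t < j < #|A|)%N -> nonzeros As (Fs j) = 0%N) ->
  (t < #|A|)%N -> y \in grid As -> Fs t y != 0 ->
  (#|A| - t <= \sum_(a in A) (F (a :: y) != 0%R : nat))%N.
Proof.
move=> hF hz tA hy Ft; pose q := \poly_(j < t.+1) Fs j y.
have q0 : q != 0.
  apply: contraNneq Ft => /(congr1 (fun p : {poly K} => p`_t)).
  by rewrite coef_poly ltnSn coef0 => ->.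
rewrite (eq_bigr (fun a => (q.[a] != 0%R : nat))); first exact: poly_nonzeros_ge (size_poly _ _).
move=> a aA; rewrite hF // horner_poly.
rewrite -(big_mkord xpredT (fun j => a ^+ j * Fs j y)) (big_cat_nat _ (n := t.+1)) //=.
have -> : \sum_(t.+1 <= j < #|A|) a ^+ j * Fs j y = 0.
  rewrite big_nat big1 // => j /andP[tj jA].
  by rewrite (proj1 (nonzeros_eq0 _ _) (hz j _) y hy) ?mulr0 // tj.
by rewrite addr0 -(big_mkord xpredT (fun j => Fs j y * a ^+ j)); under eq_bigr do rewrite mulrC.
Qed.

Theorem nonzeros_ge_min (As : seq {set K}) E F :
  sorted leq [seq #|A| | A : {set K} <- As] -> polyfun (size As) E F -> (0 < nonzeros As F)%N ->
  (min_nonzeros [seq #|A| | A : {set K} <- As] E <= nonzeros As F)%N.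
Proof.
elim: As E F => [|A As IH] E F //= sAs hF hc.
have [Fs [hFs hFz hFA]] := polyfun_head_expansion A hF.
have ex : exists j, (j < #|A|)%N && (0 < nonzeros As (Fs j))%N.
  suff /existsP[j hj] : [exists j : 'I_#|A|, 0 < nonzeros As (Fs j)]%N.
    by exists j; rewrite ltn_ord.
  move: hc; rewrite nonzeros_gt0 => /hasP[[|a y]]; rewrite mem_grid_cons // => /andP[aA hy].
  rewrite hFA //; apply: contraNT; rewrite negb_exists => /forallP hn.
  rewrite big1 // => j _.
  have /nonzeros_eq0 -> // : nonzeros As (Fs j) = 0%N by apply/eqP; rewrite -leqn0 leqNgt hn.
  by rewrite mulr0.
have ub j : (j < #|A|)%N && (0 < nonzeros As (Fs j))%N -> (j <= #|A|)%N.
  by case/andP => /ltnW.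
have [t /andP[tA ht] tmax] := ex_maxnP ex ub.
have tE : (t <= E)%N.
  rewrite leqNgt; apply: contraTN ht => hEt; rewrite -leqNgt leqn0.
  by apply/eqP/nonzeros_eq0 => y _; exact: hFz.
apply: (leq_trans (min_nonzeros_cons_le sAs tE tA)).
apply: (@leq_trans ((#|A| - t) * nonzeros As (Fs t))).
  by rewrite leq_mul2l IH ?orbT // (path_sorted sAs).
rewrite nonzeros_cons /nonzeros big_distrr /= exchange_big /= big_seq [X in (_ <= X)%N]big_seq.
apply: leq_sum => y hy; case: (boolP (Fs t y != 0)) => Ft; last by rewrite muln0.
rewrite muln1; apply: fibre_nonzeros_ge hFA _ tA hy Ft => j /andP[tj jA].
apply/eqP; rewrite -leqn0 leqNgt; apply/negP => hp.
by have := tmax j; rewrite jA hp => /(_ isT); lia.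
Qed.

Lemma polyfun_mono N N' E E' F :
  (N <= N')%N -> (E <= E')%N -> polyfun N E F -> polyfun N' E' F.
Proof. by move=> NN' EE' [r [hr hF]]; exists r; split => // p /hr []; lia. Qed.

Lemma polyfun1 : polyfun 0 0 (fun _ => 1).
Proof.
exists [:: (1, [::])]; split => [p|x]; last by rewrite big_seq1 mulr1.
by rewrite inE => /eqP ->.
Qed.

Lemma polyfun_head_mul N (q : {poly K}) e E G : (size q <= e.+1)%N -> polyfun N E G ->
  polyfun N.+1 (e + E) (fun x => q.[head 0 x] * G (behead x)).
Proof.
move=> sq [r [hr hG]].
exists [seq (q`_j * p.1, j :: p.2) | j <- iota 0 (size q), p <- r]; split.
  move=> p /allpairsP[[j [c m]] /= [+ /hr /= [h1 h2] ->]] /=.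
  by rewrite mem_iota add0n => hj; split => //; apply: leq_add => //; rewrite -ltnS (leq_trans hj).
move=> x; rewrite big_flatten big_map (horner_coef q) big_distrl /=.
rewrite -(big_mkord xpredT (fun i => q`_i * head 0 x ^+ i * G (behead x))) /index_iota subn0.
apply: eq_bigr => j _; rewrite big_map hG mulr_sumr; apply: eq_bigr => p _ /=; ring.
Qed.

Lemma count_notin_take (T : eqType) (s : seq T) m : uniq s -> (m <= size s)%N ->
  count (fun a => a \notin take m s) s = (size s - m)%N.
Proof.
move=> us hm; rewrite -[X in count _ X](cat_take_drop m s) count_cat.
move: us; rewrite -{1}(cat_take_drop m s) cat_uniq => /and3P[_ hn _].
rewrite (eq_in_count (a2 := pred0)) => [|a ->] //.
rewrite count_pred0 (eq_in_count (a2 := predT)) ?count_predT ?size_drop // => a ha /=.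
by apply: contra hn => h; apply/hasP; exists a.
Qed.

Lemma nonzeros_vanish_take (A : {set K}) As m G : (m <= #|A|)%N ->
  nonzeros (A :: As)
    (fun x => (\prod_(a <- take m (enum A)) ('X - a%:P)).[head 0 x] * G (behead x))
  = ((#|A| - m) * nonzeros As G)%N.
Proof.
move=> mA; rewrite nonzeros_cons /=.
under eq_bigr => a _ do rewrite nonzeros_scale.
rewrite -big_distrl /= -big_enum /= sum_nat_bool_count.
rewrite (eq_count (a2 := fun a => a \notin take m (enum A))); last first.
  by move=> a /=; rewrite -rootE root_prod_XsubC.
by rewrite count_notin_take ?enum_uniq // -?cardE.
Qed.

Theorem min_nonzeros_attained (As : seq {set K}) E : all (fun A : {set K} => 0 < #|A|)%N As ->
  exists F, polyfun (size As) E F /\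
            nonzeros As F = min_nonzeros [seq #|A| | A : {set K} <- As] E.
Proof.
elim: As E => [|A As IH] E /=.
  by exists (fun _ => 1); split; [exact: polyfun_mono _ _ polyfun1 | rewrite nonzeros1 big_nil].
case/andP=> A0 As0; pose Q m x := (\prod_(a <- take m (enum A)) ('X - a%:P)).[head 0 x].
have sQ m : (m <= #|A|)%N -> (size (\prod_(a <- take m (enum A)) ('X - a%:P))%R <= m.+1)%N.
  by rewrite size_prod_XsubC size_take -cardE; case: ifP; lia.
case: ifP => hE.
  have EA : (E <= #|A|)%N := leq_trans (ltnW hE) (leq_pred _).
  exists (fun x => Q E x * 1); split.
    by apply: (polyfun_mono _ _ (polyfun_head_mul (sQ E EA) polyfun1)); rewrite ?addn0.
  by rewrite /Q (@nonzeros_vanish_take A As E (fun _ => 1)) ?nonzeros1 ?big_map.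
have [G [hG <-]] := IH (E - #|A|.-1)%N As0.
exists (fun x => Q #|A|.-1 x * G (behead x)); split.
  have hEA : (#|A|.-1 <= E)%N by rewrite leqNgt hE.
  by rewrite -(subnKC hEA); apply: polyfun_head_mul hG; apply/sQ/leq_pred.
by rewrite /Q nonzeros_vanish_take ?leq_pred // -{1}(prednK A0) subSnn mul1n.
Qed.

End GridPolynomials.

Lemma is_hdeg_eventually_const (H : nat -> nat) e N :
  (0 < e)%N -> (forall d, (N <= d)%N -> H d = e) -> is_hdeg H e.
Proof.
move=> e0 He; left; exists 1%N; split => //; split => // eps eps0.
by exists N => d /He ->; rewrite /= expr0 divr1 subrr normr0.
Qed.

Lemma expf_card_pred (K : finFieldType) (y : K) : y ^+ #|K|.-1 = (y != 0)%:R.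
Proof.
have q1 := card_finNzRing_gt1 K.
have [->|y0] /= := eqVneq y 0; first by rewrite expr0n; case: #|K| q1 => [|[]].
by apply: (mulIf y0); rewrite mul1r -exprSr prednK ?expf_card // ltnW.
Qed.

Section ProjectivePoints.
Variables (K : finFieldType) (s : nat).
Implicit Types (x P : pt K s) (A : 'I_s -> {set K}) (f : {mpoly K[s]}).

Lemma normalize_scale x c : c != 0 -> normalize [ffun j => c * x j] = normalize x.
Proof.
move=> c0; rewrite /normalize.
have eqp : (fun i => [ffun j => c * x j] i != 0) =1 (fun i => x i != 0).
  by move=> i; rewrite ffunE mulf_eq0 negb_or c0.
rewrite (eq_pick eqp); case: pickP => [i hi|h].
  by apply/ffunP => j; rewrite !ffunE invfM mulrACA mulVf // mul1r.
by apply/ffunP => j; rewrite ffunE; have /negbFE/eqP -> := h j; rewrite mulr0.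
Qed.

Lemma normalize_idem x : normalize (normalize x) = normalize x.
Proof.
case hp: [pick i | x i != 0] => [i|]; last first.
  have nx : normalize x = x by rewrite /normalize hp.
  by rewrite !nx.
have xi : x i != 0 by move: hp; case: pickP => // j hj [<-].
have nx : normalize x = [ffun j => (x i)^-1 * x j] by rewrite /normalize hp.
by rewrite nx normalize_scale ?invr_eq0 // nx.
Qed.

Lemma normalize_projX A x : x \in projX A -> normalize x = x.
Proof. by case/imsetP => z _ ->; rewrite normalize_idem. Qed.

Lemma projX_has1 A x : x \in projX A -> exists i, x i = 1.
Proof.
case/imsetP => z; rewrite inE => /andP[z0 _] ->; rewrite /normalize.
case: pickP => [i zi|h]; first by exists i; rewrite ffunE mulVf.
case/eqP: z0; apply/ffunP => j; rewrite ffunE.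
by have /negbFE/eqP := h j.
Qed.

Lemma projX_scale_eq A x P c : x \in projX A -> P \in projX A -> c != 0 ->
  x = [ffun j => c * P j] -> x = P.
Proof.
by move=> hx hP c0 e; rewrite -(normalize_projX hx) e normalize_scale // (normalize_projX hP).
Qed.

Lemma dhomog_prod_seq (I : Type) (r : seq I) (F : I -> {mpoly K[s]}) e :
  (forall i, F i \is e.-homog) -> \prod_(i <- r) F i \is (e * size r).-homog.
Proof.
move=> hF; elim: r => [|i r IH]; first by rewrite big_nil muln0 dhomog1.
by rewrite big_cons /= mulnS; apply: dhomogM.
Qed.

Lemma dhomogX1 (i : 'I_s) : ('X_i : {mpoly K[s]}) \is 1.-homog.
Proof. by rewrite dhomogX; apply/eqP; exact: mdeg1. Qed.

Lemma dhomog_msize f D : f \is D.-homog -> (msize f <= D.+1)%N.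
Proof.
move=> hf; rewrite msizeE; apply/bigmax_leqP_seq => m hm _.
by rewrite (dhomog_mf hf hm).
Qed.

(* As [y ^+ (q - 1)] is [1] or [0], at a point [x] with [x_i <> 0] the [j]-th
   factor is [1] if [x_j P_i = P_j x_i] and [0] otherwise, so the product
   detects the points proportional to [P]; the factor ['X_i ^+ e] kills the
   points with [x_i = 0]. *)
Definition sep_poly P (i : 'I_s) (e : nat) : {mpoly K[s]} :=
  (P i ^+ e)^-1 *: ('X_i ^+ e * \prod_(j < s)
     ('X_i ^+ #|K|.-1 - (P i *: 'X_j - P j *: 'X_i) ^+ #|K|.-1)).

Lemma sep_poly_homog P i e : sep_poly P i e \is (e + #|K|.-1 * s).-homog.
Proof.
have homogXn n (p : {mpoly K[s]}) : p \is 1.-homog -> p ^+ n \is n.-homog.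
  by move/(dhomogMn n); rewrite mul1n.
apply/dhomogZ/dhomogM; first exact/homogXn/dhomogX1.
have hs : size (index_enum 'I_s) = s by rewrite [index_enum _]unlock -enumT size_enum_ord.
rewrite -[X in (_ * X)%N]hs; apply: dhomog_prod_seq => j.
apply/rpredB/homogXn; first exact/homogXn/dhomogX1.
by apply: rpredB; apply/dhomogZ/dhomogX1.
Qed.

Lemma sep_poly_eval A P i e x : P \in projX A -> x \in projX A -> P i != 0 -> (0 < e)%N ->
  (sep_poly P i e).@[x] = (x == P)%:R.
Proof.
move=> hP hx Pi e0.
rewrite /sep_poly mevalZ mevalM rmorphXn /= mevalXU rmorph_prod /=.
under eq_bigr => j _ do rewrite mevalB !rmorphXn /= mevalB !mevalZ !mevalXU !expf_card_pred.
have [->|xP] /= := eqVneq x P.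
  by rewrite big1 ?mulr1 ?mulVf ?expf_neq0 // => j _; rewrite Pi mulrC subrr eqxx subr0.
have [xi0|xi0] := eqVneq (x i) 0; first by rewrite xi0 expr0n gtn_eqF // mul0r mulr0.
have [/existsP[j hj]|hn] := boolP [exists j, P i * x j - P j * x i != 0].
  by rewrite (bigD1 j) //= hj subrr mul0r !mulr0.
case/eqP: xP; apply: (projX_scale_eq hx hP (c := x i / P i)); first by rewrite mulf_neq0 ?invr_eq0.
apply/ffunP => j; rewrite ffunE.
move: hn; rewrite negb_exists => /forallP/(_ j); rewrite negbK subr_eq0 => /eqP h.
by apply: (mulfI Pi); rewrite h; field.
Qed.

(* In degree [d > (q - 1) s] the [sep_poly]s give a left inverse of the
   evaluation matrix, so that it has full column rank [|X|]. *)
Lemma hilbX_card A d : (#|K|.-1 * s < d)%N -> hilbX A d = #|projX A|.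
Proof.
move=> hd; apply/eqP; rewrite eqn_leq rank_leq_col /hilbX.
set M := (\matrix_(i < _, j < _) _).
pose e := (d - #|K|.-1 * s)%N.
have de : d = (e + #|K|.-1 * s)%N by rewrite /e; lia.
have e0 : (0 < e)%N by rewrite /e; lia.
pose hP P := if [pick i | P i != 0] is Some i then sep_poly P i e else 0.
pose D := \matrix_(k < #|projX A|, m < #|Defs.bmnm s d|) (hP (enum_val k))@_(val (enum_val m)).
suff DM : D *m M = 1%:M by have := mxrankM_maxr D M; rewrite DM mxrank1.
apply/matrixP => k j; rewrite !mxE; under eq_bigr => m _ do rewrite !mxE.
have hPX : enum_val k \in projX A := enum_valP k.
have [i [hPi Pi]] : exists i, hP (enum_val k) = sep_poly (enum_val k) i e /\ enum_val k i != 0.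
  rewrite /hP; case: pickP => [i hi|h]; first by exists i.
  by case: (projX_has1 hPX) => i hi; move: (h i); rewrite hi oner_neq0.
have hh : hP (enum_val k) \is d.-homog by rewrite hPi de; apply: sep_poly_homog.
rewrite -(big_enum_val (fun m : Defs.bmnm s d => (hP (enum_val k))@_(val m) *
   (if mdeg m == d then ('X_[val m] : {mpoly K[s]}).@[enum_val j] else 0))) /=.
have -> : (k == j) = (enum_val j == enum_val k) by rewrite eq_sym (inj_eq enum_val_inj).
rewrite -(sep_poly_eval hPX (enum_valP j) Pi e0) -hPi.
rewrite {2}(mpolywE (dhomog_msize hh)) rmorph_sum /=; apply: eq_bigr => m _.
rewrite mevalZ; case: ifP => // /eqP hm.
by rewrite (dhomog_nemf_coeff hh) ?mul0r //; apply/eqP.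
Qed.

Lemma in_IX_vanish A f : in_IX A f -> {in projX A, forall x, f.@[x] = 0}.
Proof.
case=> r [hr ->] x hx; rewrite rmorph_sum /= big_seq big1 // => gh hgh.
by rewrite mevalM; have [_ ->] := hr _ hgh; rewrite ?mulr0.
Qed.

Lemma vanish_in_IX A f e : f \is e.-homog -> {in projX A, forall x, f.@[x] = 0} -> in_IX A f.
Proof.
move=> hf hv; exists [:: (1, f)]; split; last by rewrite big_seq1 mul1r.
by move=> gh; rewrite inE => /eqP -> /=; split; [exists e|].
Qed.

End ProjectivePoints.

Lemma nth_map_ord (T : Type) (x0 : T) n (f : 'I_n -> T) (j : 'I_n) :
  nth x0 [seq f i | i <- enum 'I_n] j = f j.
Proof. by rewrite (nth_map j) ?size_enum_ord // nth_ord_enum. Qed.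

Lemma pick_ord0 n (P : pred 'I_n.+1) : P ord0 -> [pick i | P i] = Some ord0.
Proof. by move=> h; rewrite /pick /enum_mem -enumT enum_ordSl /= unfold_in h. Qed.

Lemma mnm_eval_prod (K : finFieldType) N (m : seq nat) (y : seq K) : (size m <= N)%N ->
  mnm_eval m y = \prod_(i < N) nth 0 y i ^+ nth 0%N m i.
Proof.
elim: m N y => [|e m IH] N y /=.
  by move=> _; rewrite big1 // => i _; rewrite nth_nil expr0.
case: N => // N hs; rewrite big_ord_recl /= (IH N) //; congr (_ * _).
by apply: eq_bigr => i _; rewrite nth_behead.
Qed.

Lemma sumn_nth N (m : seq nat) : (size m <= N)%N -> (\sum_(i < N) nth 0%N m i)%N = sumn m.
Proof.
elim: m N => [|e m IH] N /=; first by move=> _; rewrite big1 // => i _; rewrite nth_nil.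
by case: N => // N hs; rewrite big_ord_recl /= -(IH N).
Qed.

Section AffineChart.
Variables (K : finFieldType) (n : nat) (A : 'I_n.+1 -> {set K}).
Implicit Types (x : pt K n.+1) (y : seq K) (f : {mpoly K[n.+1]}).

Definition tail_sets : seq {set K} := [seq A (lift ord0 j) | j <- enum 'I_n].

Definition chart y : pt K n.+1 :=
  [ffun i : 'I_n.+1 => if i == ord0 then 1 else nth 0 y i.-1].

Definition chart_inv x : seq K := [seq x (lift ord0 j) | j <- enum 'I_n].

Definition x0_divides f : Prop := forall m, m \in msupp f -> (0 < m ord0)%N.

Lemma size_tail_sets : size tail_sets = n.
Proof. by rewrite size_map size_enum_ord. Qed.

Lemma chart0 y : chart y ord0 = 1.
Proof. by rewrite ffunE eqxx. Qed.

Lemma chart_lift y (j : 'I_n) : chart y (lift ord0 j) = nth 0 y j.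
Proof. by rewrite ffunE eq_sym (negbTE (neq_lift _ _)). Qed.

Lemma chart_invK y : size y = n -> chart_inv (chart y) = y.
Proof.
move=> hy; apply: (@eq_from_nth _ 0); first by rewrite size_map size_enum_ord.
move=> j; rewrite size_map size_enum_ord => jn.
by rewrite (nth_map_ord _ _ (Ordinal jn)) chart_lift.
Qed.

Lemma mem_tail_grid y :
  (y \in grid tail_sets) = (size y == n) && [forall j : 'I_n, nth 0 y j \in A (lift ord0 j)].
Proof.
apply/gridP/andP; rewrite size_tail_sets => -[/eqP yn hy]; split => //.
  by apply/forallP => j; have := hy j (ltn_ord j); rewrite nth_map_ord.
by move=> j jn; rewrite (nth_map_ord _ _ (Ordinal jn)); apply: (forallP hy).
Qed.

Lemma meval_x0_eq0 f x : x0_divides f -> x ord0 = 0 -> f.@[x] = 0.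
Proof.
move=> hf x0; rewrite mevalE big_seq big1 // => m /hf m0.
by rewrite (bigD1 ord0) //= x0 expr0n gtn_eqF // mul0r mulr0.
Qed.

Lemma polyfun_chart f d : f \is d.-homog -> x0_divides f ->
  polyfun n d.-1 (fun y => f.@[chart y]).
Proof.
move=> hd hf; pose ms (m : 'X_{1..n.+1}) := [seq m (lift ord0 j) | j <- enum 'I_n].
exists [seq (f@_m, ms m) | m <- msupp f]; split.
  move=> p /mapP[m mf ->] /=; rewrite size_map size_enum_ord; split => //.
  have <- : mdeg m = d by have := dhomog_mf hd mf.
  have : (m ord0 + sumn (ms m))%N = mdeg m.
    by rewrite mdegE big_ord_recl sumnE big_map [index_enum _]unlock -enumT.
  by have := hf _ mf; lia.
move=> y; rewrite mevalE [RHS]big_map; apply: eq_bigr => m _ /=; congr (_ * _).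
rewrite big_ord_recl chart0 expr1n mul1r (mnm_eval_prod (N := n)); last first.
  by rewrite size_map size_enum_ord.
by apply: eq_bigr => j _; rewrite chart_lift nth_map_ord.
Qed.

(* The exponent of [x_0] is chosen to make every monomial of degree [d]. *)
Lemma polyfun_lift d F : (0 < d)%N -> polyfun n d.-1 F ->
  exists f, [/\ f \is d.-homog, x0_divides f & forall y, f.@[chart y] = F y].
Proof.
move=> d0 [r [hr hF]].
pose mon (m : seq nat) : 'X_{1..n.+1} :=
  [multinom (if i == ord0 then (d - sumn m) else nth 0 m i.-1)%N | i < n.+1].
have mon0 m : mon m ord0 = (d - sumn m)%N by rewrite mnmE eqxx.
have mon_lift m (j : 'I_n) : mon m (lift ord0 j) = nth 0%N m j.
  by rewrite mnmE eq_sym (negbTE (neq_lift _ _)).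
have mon_deg m : (sumn m <= d.-1)%N -> (size m <= n)%N -> mdeg (mon m) = d.
  move=> hs hn; rewrite mdegE big_ord_recl mon0.
  by under eq_bigr => j _ do rewrite mon_lift; rewrite (sumn_nth hn); lia.
exists (\sum_(p <- r) p.1 *: 'X_[mon p.2]); split.
- rewrite big_seq; apply: rpred_sum => p /hr[hs hn]; apply/dhomogZ; rewrite dhomogX; apply/eqP.
  exact: mon_deg.
- move=> m; rewrite mcoeff_msupp raddf_sum /=; apply: contraNT; rewrite -leqNgt leqn0 => /eqP m0.
  rewrite big_seq big1 // => p /hr[hs _]; rewrite mcoeffZ mcoeffX.
  suff /negbTE -> : mon p.2 != m by rewrite mulr0.
  by apply/eqP => pm; have := mon0 p.2; rewrite pm m0; lia.
- move=> y; rewrite hF rmorph_sum /= !big_seq; apply: eq_bigr => p /hr[_ hn].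
  rewrite mevalZ mevalX big_ord_recl chart0 expr1n mul1r (mnm_eval_prod (N := n)) //.
  by congr (_ * _); apply: eq_bigr => j _; rewrite chart_lift mon_lift.
Qed.

Lemma dsz_lift (j : 'I_n) : dsz A j.+2 = #|A (lift ord0 j)|.
Proof.
rewrite /dsz; case: insubP => [i _ ij|/negP[]] /=; last by rewrite ltnS.
by congr #|A _|; apply: val_inj; rewrite ij.
Qed.

Lemma tail_sizes : [seq #|X| | X : {set K} <- tail_sets] = [seq dsz A i | i <- iota 2 n].
Proof.
have -> : iota 2 n = map (addn 2) (map val (enum 'I_n)) by rewrite val_enum_ord -iotaDl.
by rewrite -!map_comp; apply: eq_map => j /=; rewrite -dsz_lift.
Qed.

Hypothesis hA : nested_cartesian A.

Lemma tail_sets_gt0 : all (fun X : {set K} => 0 < #|X|)%N tail_sets.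
Proof.
have [h01 _ _] := hA; apply/allP => X /mapP[j _ ->].
by apply/card_gt0P; exists 0; case: (h01 (lift ord0 j)).
Qed.

Lemma sorted_tail_sizes : sorted leq [seq #|X| | X : {set K} <- tail_sets].
Proof.
have [_ _ hle] := hA; rewrite -map_comp sorted_map.
apply: (@sub_sorted _ (relpre val leq)) => [i j /= ij|].
  by apply: hle; rewrite !lift0 ltnS.
by rewrite -sorted_map val_enum_ord iota_sorted.
Qed.

Lemma chart_projX y : y \in grid tail_sets -> chart y \in projX A.
Proof.
rewrite mem_tail_grid => /andP[_ /forallP hy]; have [h01 _ _] := hA.
have <- : normalize (chart y) = chart y.
  rewrite /normalize (pick_ord0 (P := fun i => chart y i != 0)) ?chart0 ?oner_neq0 //.
  by apply/ffunP => i; rewrite !ffunE invr1 mul1r.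
apply: imset_f; rewrite inE; apply/andP; split.
  by apply/eqP => /ffunP/(_ ord0)/eqP; rewrite chart0 ffunE oner_eq0.
apply/forallP => i; case: (unliftP ord0 i) => [j ->|->]; first by rewrite chart_lift.
by rewrite chart0; case: (h01 ord0).
Qed.

(* Condition (ii) makes the representative with first coordinate [1] lie in
   the grid of the remaining sets. *)
Lemma projX_chart x : x \in projX A -> x ord0 != 0 ->
  chart_inv x \in grid tail_sets /\ chart (chart_inv x) = x.
Proof.
have [_ hdiv _] := hA.
case/imsetP => z; rewrite inE => /andP[z0 /forallP hz] ->.
have [zo|zo] := eqVneq (z ord0) 0.
  by rewrite /normalize; case: pickP => [i _|_]; rewrite ?ffunE zo ?mulr0 eqxx.
rewrite /normalize (pick_ord0 (P := fun i => z i != 0) zo) => _.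
have sz : size (chart_inv [ffun j => (z ord0)^-1 * z j]) = n.
  by rewrite size_map size_enum_ord.
split.
  rewrite mem_tail_grid sz eqxx; apply/forallP => j; rewrite nth_map_ord ffunE mulrC.
  by apply: hdiv => //; rewrite lift0.
apply/ffunP => i; case: (unliftP ord0 i) => [j ->|->].
  by rewrite chart_lift nth_map_ord.
by rewrite chart0 ffunE mulVf.
Qed.

Lemma card_VX_add_nonzeros f : x0_divides f ->
  (#|VX A f| + nonzeros tail_sets (fun y => f.@[chart y]) = #|projX A|)%N.
Proof.
move=> hf; set X1 := [set x in projX A | x ord0 != 0].
have hperm : perm_eq (map chart (grid tail_sets)) (enum X1).
  apply: uniq_perm; rewrite ?enum_uniq //.
    rewrite map_inj_in_uniq ?grid_uniq // => y1 y2.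
    rewrite !mem_tail_grid => /andP[/eqP s1 _] /andP[/eqP s2 _] e.
    by rewrite -(chart_invK s1) -(chart_invK s2) e.
  move=> x; rewrite mem_enum inE; apply/mapP/andP => [[y hy ->]|[hx xo]].
    by rewrite chart_projX // chart0 oner_neq0.
  by have [hy <-] := projX_chart hx xo; exists (chart_inv x).
rewrite /nonzeros -(big_map chart xpredT (fun x : pt K n.+1 => (f.@[x] != 0%R : nat))).
rewrite (perm_big _ hperm) big_enum /= sum_nat_bool_card.
rewrite -(cardsID [set x : pt K n.+1 | f.@[x] == 0] (projX A)).
congr (_ + _)%N; apply: eq_card => x.
  by rewrite !inE andbC.
rewrite !inE; case: eqVneq => [/(meval_x0_eq0 hf) ->|_]; first by rewrite eqxx !andbF.
by rewrite andbT andbC.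
Qed.

Lemma in_IX_nonzeros_eq0 f e : f \is e.-homog -> x0_divides f ->
  in_IX A f <-> nonzeros tail_sets (fun y => f.@[chart y]) = 0%N.
Proof.
move=> hf f0; split => [/in_IX_vanish hv | /nonzeros_eq0 hz].
  by apply/nonzeros_eq0 => y /chart_projX /hv.
apply: (vanish_in_IX hf) => x hx.
have [x0|x0] := eqVneq (x ord0) 0; first exact: meval_x0_eq0.
by have [hy <-] := projX_chart hx x0; exact: hz.
Qed.

Lemma min_nonzeros_le_x0_divides f d : f \is d.-homog -> x0_divides f -> ~ in_IX A f ->
  (min_nonzeros [seq #|X| | X : {set K} <- tail_sets] d.-1
     <= nonzeros tail_sets (fun y => f.@[chart y]))%N.
Proof.
move=> hf f0 fI; apply: nonzeros_ge_min; first exact: sorted_tail_sizes.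
  by rewrite size_tail_sets; exact: polyfun_chart hf f0.
by rewrite lt0n; apply/negP => /eqP /(in_IX_nonzeros_eq0 hf f0).
Qed.

Lemma min_nonzeros_attained_x0_divides d : (0 < d)%N -> exists2 f,
  f \is d.-homog /\ x0_divides f &
  nonzeros tail_sets (fun y => f.@[chart y])
    = min_nonzeros [seq #|X| | X : {set K} <- tail_sets] d.-1.
Proof.
move=> d0; have [F [hF <-]] := min_nonzeros_attained d.-1 tail_sets_gt0.
rewrite size_tail_sets in hF; have [f [hf f0 fF]] := polyfun_lift d0 hF.
by exists f => //; apply: eq_bigr => y _; rewrite fF.
Qed.

End AffineChart.

Lemma min_nonzeros_iota (f : nat -> nat) n k l :
  (k < n)%N -> (1 <= l)%N -> (l <= (f (k + 2)).-1)%N ->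
  min_nonzeros [seq f i | i <- iota 2 n] (\sum_(2 <= i < k.+2) (f i).-1 + l).-1 =
    ((f (k + 2) - l + 1) * \prod_(k + 3 <= i < n.+2) f i)%N.
Proof.
move=> kn l1 lf; set B := [seq f i | i <- iota 2 n].
have -> : (\sum_(2 <= i < k.+2) (f i).-1 + l).-1 = (sumn [seq b.-1 | b <- take k B] + l.-1)%N.
  rewrite -map_take take_iota (minn_idPl (ltnW kn)) sumnE !big_map /index_iota subSS subn1 /=.
  lia.
have fk : nth 0%N B k = f (k + 2)%N by rewrite (nth_map 0%N) ?size_iota // nth_iota // addnC.
rewrite min_nonzeros_take ?size_map ?size_iota ?fk //; last by lia.
rewrite -map_drop drop_iota big_map /index_iota.
have -> : (2 + k.+1 = k + 3)%N by lia.
have -> : (n - k.+1 = n.+2 - (k + 3))%N by lia.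
by congr (_ * _)%N; lia.
Qed.

Theorem corollary6p9 (K : finFieldType) (s : nat) (A : 'I_s -> {set K})
  (d k l : nat) :
  nested_cartesian A ->
  (1 <= d)%N -> (d <= \sum_(2 <= i < s.+1) (dsz A i).-1)%N ->
  (k <= s - 2)%N -> (1 <= l)%N -> (l <= (dsz A (k + 2)).-1)%N ->
  d = (\sum_(2 <= i < k.+2) (dsz A i).-1 + l)%N ->
  let c := ((dsz A (k + 2) - l + 1) * \prod_(k + 3 <= i < s.+1) dsz A i)%N in
  let Ld := fun f : {mpoly K[s]} =>
    f \is d.-homog /\ (forall m, m \in msupp f -> (exists i : 'I_s, val i = 0%N /\ (0 < m i)%N)) in
  exists e : nat, is_hdeg (hilbX A) e /\
    (exists f : {mpoly K[s]}, Ld f /\ ~ in_IX A f /\ (#|VX A f| + c)%N = e) /\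
    (forall f : {mpoly K[s]}, Ld f -> ~ in_IX A f -> (#|VX A f| + c <= e)%N).
Proof.
case: s A => [|n] A hA d1 dle kle l1 lle dE c Ld.
  by exfalso; move: dle; rewrite big_geq //; lia.
have kn : (k < n)%N.
  case: n A hA dle kle {c Ld lle dE} => [|n] A _ dle; last lia.
  by move: dle; rewrite big_geq //; lia.
have hc : c = min_nonzeros [seq #|X| | X : {set K} <- tail_sets A] d.-1.
  by rewrite tail_sizes dE min_nonzeros_iota.
have c0 : (0 < c)%N by rewrite hc min_nonzeros_gt0 // all_map (tail_sets_gt0 hA).
have LdE f : Ld f <-> f \is d.-homog /\ x0_divides f.
  split=> -[hf f0]; split => // m /f0; last by exists ord0.
  by case=> i [i0 mi]; rewrite (_ : ord0 = i) //; apply: val_inj.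
have [f [hf f0] fmin] := min_nonzeros_attained_x0_divides hA d1.
have cardX : (#|VX A f| + c)%N = #|projX A| by rewrite hc -fmin card_VX_add_nonzeros.
exists #|projX A|; split; [|split].
- apply: (is_hdeg_eventually_const (N := (#|K|.-1 * n.+1).+1)) => [|e]; last exact: hilbX_card.
  by rewrite -cardX ltn_addl.
- exists f; split; first exact/LdE.
  by split => // /(in_IX_nonzeros_eq0 hA hf f0); rewrite fmin -hc => c_eq0; rewrite c_eq0 in c0.
- move=> g /LdE[hg g0] gI; rewrite -(card_VX_add_nonzeros hA g0) leq_add2l hc.
  exact: min_nonzeros_le_x0_divides.
Qed.
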